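(* There exists a copula $C\in\mathcal{C}^3_{\rm c}$ with $d_\infty(C,\psi(C))\ge\frac{3}{16}$; in particular $\sup_{C\in\mathcal{C}^3_{\rm c}}d_\infty(C,\psi(C))\ge\frac{3}{16}$.
   Context: $\mathbb{I}=[0,1]$, $\lambda$ Lebesgue measure; $d_\infty(C_1,C_2)=\max_{\mathbf{x}\in\mathbb{I}^3}|C_1(\mathbf{x})-C_2(\mathbf{x})|$. Points of $\mathbb{I}^3$ are written $(\mathbf{u},v)$, $\mathbf{u}=(u_1,u_2)$. For a three-dimensional copula $C$, $K_C$ is (a version of) the regular conditional distribution of $(U_1,U_2)$ given $U_3=v$, $(U_1,U_2,U_3)\sim C$; $F_{1|3}(u_1|t)=K_C(t,[0,u_1]\times\mathbb{I})$, $F_{2|3}(u_2|t)=K_C(t,\mathbb{I}\times[0,u_2])$. $\mathcal{C}^3_{\rm c}$ is the set of three-dimensional copulas for which $F_{1|3}(\cdot|t)$ and $F_{2|3}(\cdot|t)$ are continuous for $\lambda$-a.e. $t$; for such $C$, for a.e. $t$ the conditional copula $C^t_{12;3}$ is the unique bivariate copula with $K_C(t,[\mathbf{0},\mathbf{u}])=C^t_{12;3}(F_{1|3}(u_1|t),F_{2|3}(u_2|t))$. The partial copula is $C_p(\mathbf{s})=\int_{\mathbb{I}}C^t_{12;3}(\mathbf{s})\,d\lambda(t)$ and the partial vine copula $\psi(C)$ is defined by $\psi(C)(\mathbf{u},v)=\int_{[0,v]}C_p(F_{1|3}(u_1|t),F_{2|3}(u_2|t))\,d\lambda(t)$. *)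

From mathcomp Require Import all_boot all_order all_algebra.
From mathcomp Require Import all_classical all_reals all_analysis.
From mathcomp Require Import measurable_realfun.
Set Implicit Arguments.
Unset Strict Implicit.
Unset Printing Implicit Defensive.
Import Order.TTheory GRing.Theory Num.Theory.
Import numFieldNormedType.Exports.
Local Open Scope classical_set_scope.
Local Open Scope ring_scope.

Section Copulas.
Variable R : realType.

Definition inI (x : R) : bool := (0 <= x <= 1).

(* bivariate copula (only its values on I^2 matter) *)
Definition copula2 (C : R -> R -> R) : Prop :=
  (forall u, inI u -> [/\ C 0 u = 0, C u 0 = 0, C u 1 = u & C 1 u = u]) /\
  (forall a1 b1 a2 b2, inI a1 -> inI b1 -> inI a2 -> inI b2 ->
     a1 <= b1 -> a2 <= b2 ->
     0 <= C b1 b2 - C a1 b2 - C b1 a2 + C a1 a2).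

(* three-dimensional copula (only its values on I^3 matter):
   grounded, uniform margins, 3-increasing *)
Definition copula3 (C : R -> R -> R -> R) : Prop :=
  [/\ (forall x y, inI x -> inI y ->
         [/\ C 0 x y = 0, C x 0 y = 0 & C x y 0 = 0]),
      (forall x, inI x -> [/\ C x 1 1 = x, C 1 x 1 = x & C 1 1 x = x]) &
      (forall a1 b1 a2 b2 a3 b3,
         inI a1 -> inI b1 -> inI a2 -> inI b2 -> inI a3 -> inI b3 ->
         a1 <= b1 -> a2 <= b2 -> a3 <= b3 ->
         0 <= C b1 b2 b3 - C a1 b2 b3 - C b1 a2 b3 - C b1 b2 a3
              + C a1 a2 b3 + C a1 b2 a3 + C b1 a2 a3 - C a1 a2 a3)].

(* K is a version of the regular conditional distribution K_C of (U1,U2)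
   given U3 = t, where (U1,U2,U3) ~ C: a Markov kernel from R to R^2 with
   C(u,v) = int_[0,v] K(t,[0,u]) dlambda(t) for all (u,v) in I^3
   (this identity characterises the disintegration of the measure of C
   along its (uniform) third margin). *)
Definition cond_kernel (C : R -> R -> R -> R)
    (K : R -> probability (R * R)%type R) : Prop :=
  (forall A : set (R * R), measurable A ->
     measurable_fun [set: R] (K ^~ A)) /\
  (forall u1 u2 v, inI u1 -> inI u2 -> inI v ->
     (C u1 u2 v)%:E =
     (\int[@lebesgue_measure R]_(t in `[0%R, v])
        K t (`[0%R, u1] `*` `[0%R, u2]))%E).

Definition F13 (K : R -> probability (R * R)%type R) (t u1 : R) : R :=
  fine (K t (`[0%R, u1] `*` `[0%R, 1%R])).
Definition F23 (K : R -> probability (R * R)%type R) (t u2 : R) : R :=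
  fine (K t (`[0%R, 1%R] `*` `[0%R, u2])).

(* the defining property of C^3_c, for the version K:
   for lambda-a.e. t in I, F_{1|3}(.|t) and F_{2|3}(.|t) are continuous *)
Definition cont_cond_dfs (K : R -> probability (R * R)%type R) : Prop :=
  {ae @lebesgue_measure R, forall t, inI t ->
     {within `[0%R, 1%R], continuous (F13 K t)} /\
     {within `[0%R, 1%R], continuous (F23 K t)}}.

Definition in_Cc (C : R -> R -> R -> R) : Prop :=
  copula3 C /\ exists K, cond_kernel C K /\ cont_cond_dfs K.

(* Ct t is (a version of) the conditional copula C^t_{12;3}: for a.e. t it is
   a bivariate copula with K(t,[0,u]) = C^t(F_{1|3}(u1|t), F_{2|3}(u2|t));
   we also ask t |-> C^t(s) to be measurable. *)
Definition cond_copulas (K : R -> probability (R * R)%type R)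
    (Ct : R -> R -> R -> R) : Prop :=
  (forall s1 s2 : R, measurable_fun (`[0%R, 1%R] : set R) (fun t : R => Ct t s1 s2)) /\
  {ae @lebesgue_measure R, forall t, inI t ->
     copula2 (Ct t) /\
     (forall u1 u2, inI u1 -> inI u2 ->
        K t (`[0%R, u1] `*` `[0%R, u2]) =
        (Ct t (F13 K t u1) (F23 K t u2))%:E)}.

Definition partial_copula (Ct : R -> R -> R -> R) (s1 s2 : R) : R :=
  fine (\int[@lebesgue_measure R]_(t in `[0%R, 1%R]) (Ct t s1 s2)%:E)%E.

Definition pvc (K : R -> probability (R * R)%type R)
    (Ct : R -> R -> R -> R) (u1 u2 v : R) : R :=
  fine (\int[@lebesgue_measure R]_(t in `[0%R, v])
          (partial_copula Ct (F13 K t u1) (F23 K t u2))%:E)%E.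

(* d_infty(C1,C2) = max over I^3 of |C1 - C2| (written as a sup) *)
Definition dinf (C1 C2 : R -> R -> R -> R) : R :=
  sup [set r | exists u1 u2 v, [/\ inI u1, inI u2, inI v &
                 r = `|C1 u1 u2 v - C2 u1 u2 v|]].

End Copulas.

From mathcomp Require Import all_boot all_order all_algebra.
From mathcomp Require Import all_classical all_reals all_analysis.
From mathcomp Require Import measurable_realfun.
From mathcomp Require Import ring lra.
Import Order.TTheory GRing.Theory Num.Theory.
Import numFieldNormedType.Exports.
Local Open Scope classical_set_scope.
Local Open Scope ring_scope.
Set Implicit Arguments.
Unset Strict Implicit.

(* Cut the conditioning variable t into the four quarters of I.  On the j-th
   quarter, (U1, U2) given U3 = t is a shuffle of Min that permutes the four
   quarters of I (a different permutation for each j), with one of its margins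
   distorted by a piecewise linear distribution function, F(u) = max(u/2,
   3u/2 - 1/2) or its mirror 2u - F(u).  The conditional margins average to the
   uniform one, so C(u, v) = int_0^v K(t, [0, u]) dt is a 3-copula whose
   conditional distribution functions are continuous and whose conditional
   copulas are the four shuffles.  The partial copula is the average of the
   shuffles, but psi(C) evaluates it at the distorted arguments: at
   (1/2, 1/2, 1) one finds C = 3/8 and psi(C) = 3/16. *)

Ltac no_if t := lazymatch t with context [if _ then _ else _] => fail | _ => idtac end.

Ltac cases_lra := match goal with
  | |- context [if ?x <= ?y then _ else _] => no_if x; no_if y;
      case: (leP x y) => ? /=; try (exfalso; lra); cases_lra
  | |- context [if ?x < ?y then _ else _] => no_if x; no_if y;
      case: (ltP x y) => ? /=; try (exfalso; lra); cases_lra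
  | _ => rewrite ?andTb ?andbT; lra
  end.

(* For closed comparisons: decide each test by lra instead of branching on it. *)
Ltac eval_ifs := repeat match goal with
  | |- context [if ?x <= ?y then _ else _] => no_if x; no_if y;
      first [ rewrite (_ : x <= y = true); last by apply/idP; lra
            | rewrite (_ : x <= y = false); last by apply/negbTE; rewrite -ltNge; lra ]
  | |- context [if ?x < ?y then _ else _] => no_if x; no_if y;
      first [ rewrite (_ : x < y = true); last by apply/idP; lra
            | rewrite (_ : x < y = false); last by apply/negbTE; rewrite -leNgt; lra ]
  end; lra.

Section quarters.
Variable R : realType.
Implicit Types k m t u v z : R.

Definition qclamp z : R := if z <= 0 then 0 else if z <= 1/4 then z else 1/4.

Definition on_quarters {T : Type} (a0 a1 a2 a3 : T) t : T :=
  if t < 1/4 then a0 else if t < 1/2 then a1 else if t < 3/4 then a2 else a3.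

Definition quarter_mix (c0 c1 c2 c3 v : R) : R :=
  qclamp v * c0 + qclamp (v - 1/4) * c1 + qclamp (v - 1/2) * c2 + qclamp (v - 3/4) * c3.

Lemma qclamp_ge0 z : 0 <= qclamp z.
Proof. rewrite /qclamp; cases_lra. Qed.

Lemma qclamp_le z : qclamp z <= 1/4.
Proof. rewrite /qclamp; cases_lra. Qed.

Lemma le_qclamp z x : z <= x -> qclamp z <= qclamp x.
Proof. move=> ?; rewrite /qclamp; cases_lra. Qed.

Lemma qclamp_le0 z : z <= 0 -> qclamp z = 0.
Proof. move=> ?; rewrite /qclamp; cases_lra. Qed.

Lemma qclamp_ge z : 1/4 <= z -> qclamp z = 1/4.
Proof. move=> ?; rewrite /qclamp; cases_lra. Qed.

Lemma qclamp_sum u : inI u ->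
  qclamp u + qclamp (u - 1/4) + qclamp (u - 1/2) + qclamp (u - 3/4) = u.
Proof. move=> /andP[? ?]; rewrite /qclamp; cases_lra. Qed.

Lemma inI1 : inI (1 : R). Proof. by rewrite /inI ler01 lexx. Qed.

Lemma in01_ge0 (c : R) : inI c -> 0 <= c.
Proof. by case/andP. Qed.

Lemma on_quarters_map {T U : Type} (f : T -> U) a0 a1 a2 a3 t :
  f (on_quarters a0 a1 a2 a3 t) = on_quarters (f a0) (f a1) (f a2) (f a3) t.
Proof. by rewrite /on_quarters; case: ifP => //; case: ifP => //; case: ifP. Qed.

Lemma on_quarters_ind {T : Type} (P : T -> Prop) a0 a1 a2 a3 t :
  P a0 -> P a1 -> P a2 -> P a3 -> P (on_quarters a0 a1 a2 a3 t).
Proof. by move=> *; rewrite /on_quarters; case: ifP => //; case: ifP => //; case: ifP. Qed.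

Lemma continuous_on_quarters (f0 f1 f2 f3 : R -> R) t :
  continuous f0 -> continuous f1 -> continuous f2 -> continuous f3 ->
  continuous (on_quarters f0 f1 f2 f3 t).
Proof. exact: (on_quarters_ind (P := fun f : R -> R => continuous f)). Qed.

Lemma quarter_mix1 c0 c1 c2 c3 :
  quarter_mix c0 c1 c2 c3 1 = (c0 + c1 + c2 + c3) / 4.
Proof. by rewrite /quarter_mix !qclamp_ge; lra. Qed.

Lemma quarter_mix_cst c v : inI v -> quarter_mix c c c c v = c * v.
Proof. by move=> /qclamp_sum hv; rewrite /quarter_mix -!mulrDl hv mulrC. Qed.

Lemma quarter_mix0 c0 c1 c2 c3 : quarter_mix c0 c1 c2 c3 0 = 0.
Proof. by rewrite /quarter_mix !qclamp_le0 ?mul0r ?addr0 //; lra. Qed.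

Lemma quarter_mix_in01 c0 c1 c2 c3 v :
  inI c0 -> inI c1 -> inI c2 -> inI c3 -> inI (quarter_mix c0 c1 c2 c3 v).
Proof.
rewrite /inI /quarter_mix.
have bound k c : 0 <= c <= 1 -> 0 <= qclamp (v - k) * c <= 1/4.
  move=> /andP[c_ge0 c_le1]; rewrite mulr_ge0 ?qclamp_ge0 //=.
  by rewrite -[leRHS]mulr1 ler_pM ?qclamp_ge0 ?qclamp_le.
move=> /(bound 0) h0 /(bound (1/4)) h1 /(bound (1/2)) h2 /(bound (3/4)) h3.
rewrite subr0 in h0; lra.
Qed.

Definition increasing2 (g : R -> R -> R) : Prop :=
  forall a1 b1 a2 b2, inI a1 -> inI b1 -> inI a2 -> inI b2 ->
    a1 <= b1 -> a2 <= b2 -> 0 <= g b1 b2 - g a1 b2 - g b1 a2 + g a1 a2.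

Definition df01 (f : R -> R) : Prop :=
  [/\ f 0 = 0, f 1 = 1, {homo f : x y / x <= y} & forall x, inI x -> inI (f x)].

Lemma df01_id : df01 id.
Proof. by split. Qed.

Section distorted_copula.
Variables (C : R -> R -> R) (f g : R -> R).
Hypotheses (C2 : copula2 C) (df_f : df01 f) (df_g : df01 g).

Lemma distorted_copula_boundary u : inI u ->
  [/\ C (f 0) (g u) = 0, C (f u) (g 0) = 0, C (f u) (g 1) = f u & C (f 1) (g u) = g u].
Proof.
case: df_f => f0 f1 _ fI; case: df_g => g0 g1 _ gI uI.
rewrite f0 f1 g0 g1; have [-> _ _ ->] := C2.1 _ (gI _ uI).
by have [_ -> -> _] := C2.1 _ (fI _ uI).
Qed.

Lemma increasing2_distorted : increasing2 (fun x y => C (f x) (g y)).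
Proof.
case: df_f => _ _ f_up fI; case: df_g => _ _ g_up gI.
by move=> a1 b1 a2 b2 *; apply: C2.2; auto.
Qed.

End distorted_copula.

Lemma quarter_mix_increasing (g0 g1 g2 g3 : R -> R -> R) (C : R -> R -> R -> R)
    a1 b1 a2 b2 a3 b3 :
  (forall x y v, C x y v = quarter_mix (g0 x y) (g1 x y) (g2 x y) (g3 x y) v) ->
  increasing2 g0 -> increasing2 g1 -> increasing2 g2 -> increasing2 g3 ->
  inI a1 -> inI b1 -> inI a2 -> inI b2 -> a1 <= b1 -> a2 <= b2 -> a3 <= b3 ->
  0 <= C b1 b2 b3 - C a1 b2 b3 - C b1 a2 b3 - C b1 b2 a3
       + C a1 a2 b3 + C a1 b2 a3 + C b1 a2 a3 - C a1 a2 a3.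
Proof.
move=> CE i0 i1 i2 i3 ha1 hb1 ha2 hb2 h1 h2 h3.
pose D (g : R -> R -> R) := g b1 b2 - g a1 b2 - g b1 a2 + g a1 a2.
pose w k := qclamp (b3 - k) - qclamp (a3 - k).
have w_ge0 k : 0 <= w k by rewrite subr_ge0 le_qclamp // lerB.
have -> : C b1 b2 b3 - C a1 b2 b3 - C b1 a2 b3 - C b1 b2 a3
          + C a1 a2 b3 + C a1 b2 a3 + C b1 a2 a3 - C a1 a2 a3 =
          w 0 * D g0 + w (1/4) * D g1 + w (1/2) * D g2 + w (3/4) * D g3.
  by rewrite !CE /quarter_mix /w /D !subr0; ring.
by rewrite !addr_ge0 // mulr_ge0 //; [apply: i0 | apply: i1 | apply: i2 | apply: i3].
Qed.

(* The mass in [0, s1] x [0, s2] of the graph of x |-> x - k + q over the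
   quarter [k, k + 1/4[. *)
Definition shuffle_piece k q s1 s2 : R := qclamp (Num.min s1 (s2 + k - q) - k).

Definition shuffle_copula (q0 q1 q2 q3 s1 s2 : R) : R :=
  shuffle_piece 0 q0 s1 s2 + shuffle_piece (1/4) q1 s1 s2 +
  shuffle_piece (1/2) q2 s1 s2 + shuffle_piece (3/4) q3 s1 s2.

Definition quarter_shuffle (q0 q1 q2 q3 x : R) : R :=
  on_quarters (x + q0) (x - 1/4 + q1) (x - 1/2 + q2) (x - 3/4 + q3) x.

Lemma shuffle_piece_increasing k q a1 b1 a2 b2 : a1 <= b1 -> a2 <= b2 ->
  0 <= shuffle_piece k q b1 b2 - shuffle_piece k q a1 b2
       - shuffle_piece k q b1 a2 + shuffle_piece k q a1 a2.
Proof.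
move=> h1 h2; rewrite /shuffle_piece.
have up x y : x <= y -> qclamp (x - k) <= qclamp (y - k) by move=> ?; apply/le_qclamp/lerB.
case: (leP a1 (a2 + k - q)) => h.
  rewrite (min_idPl (_ : a1 <= b2 + k - q)); last lra.
  suff : qclamp (Num.min b1 (a2 + k - q) - k) <= qclamp (Num.min b1 (b2 + k - q) - k) by lra.
  by apply: up; rewrite le_min !ge_min lexx /=; apply/orP; right; lra.
rewrite (min_idPr (_ : a2 + k - q <= b1)); last lra.
suff : qclamp (Num.min a1 (b2 + k - q) - k) <= qclamp (Num.min b1 (b2 + k - q) - k) by lra.
by apply: up; rewrite le_min !ge_min lexx h1 orbT.
Qed.

Lemma increasing2_shuffle_copula q0 q1 q2 q3 : increasing2 (shuffle_copula q0 q1 q2 q3).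
Proof.
move=> a1 b1 a2 b2 _ _ _ _ h1 h2; rewrite /shuffle_copula.
have := shuffle_piece_increasing 0 q0 h1 h2.
have := shuffle_piece_increasing (1/4) q1 h1 h2.
have := shuffle_piece_increasing (1/2) q2 h1 h2.
have := shuffle_piece_increasing (3/4) q3 h1 h2.
lra.
Qed.

Lemma shuffle_copula_in01 q0 q1 q2 q3 s1 s2 : inI (shuffle_copula q0 q1 q2 q3 s1 s2).
Proof.
have piece k q : 0 <= shuffle_piece k q s1 s2 <= 1/4 by rewrite qclamp_ge0 qclamp_le.
move: (piece 0 q0) (piece (1/4) q1) (piece (1/2) q2) (piece (3/4) q3).
rewrite /inI /shuffle_copula; lra.
Qed.

Section shuffle_margins.
Variables (k q u : R).

Lemma shuffle_piece0l : 0 <= k -> shuffle_piece k q 0 u = 0.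
Proof. move=> ?; rewrite /shuffle_piece /qclamp /Order.min; cases_lra. Qed.

Lemma shuffle_piece0r : 0 <= q -> shuffle_piece k q u 0 = 0.
Proof. move=> ?; rewrite /shuffle_piece /qclamp /Order.min; cases_lra. Qed.

Lemma shuffle_piece1r : q <= 3/4 -> shuffle_piece k q u 1 = qclamp (u - k).
Proof. move=> ?; rewrite /shuffle_piece /qclamp /Order.min; cases_lra. Qed.

Lemma shuffle_piece1l : k <= 3/4 -> shuffle_piece k q 1 u = qclamp (u - q).
Proof. move=> ?; rewrite /shuffle_piece /qclamp /Order.min; cases_lra. Qed.

End shuffle_margins.

Lemma copula2_shuffle q0 q1 q2 q3 :
  0 <= q0 <= 3/4 -> 0 <= q1 <= 3/4 -> 0 <= q2 <= 3/4 -> 0 <= q3 <= 3/4 ->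
  (forall u, inI u ->
     qclamp (u - q0) + qclamp (u - q1) + qclamp (u - q2) + qclamp (u - q3) = u) ->
  copula2 (shuffle_copula q0 q1 q2 q3).
Proof.
move=> /andP[? ?] /andP[? ?] /andP[? ?] /andP[? ?] uniform2.
split; last exact: increasing2_shuffle_copula.
move=> u hu; rewrite /shuffle_copula; split.
- by rewrite !shuffle_piece0l ?addr0 //; lra.
- by rewrite !shuffle_piece0r ?addr0.
- by rewrite !shuffle_piece1r ?subr0 ?qclamp_sum //; lra.
- by rewrite !shuffle_piece1l ?uniform2 //; lra.
Qed.

End quarters.

Section quarter_measure.
Variable R : realType.
Local Notation mu := (@lebesgue_measure R).
Implicit Types c k m t v : R.

(* [k, k + 1/4[ if s, [k, k + 1/4] otherwise *)
Definition quarter_itv k (s : bool) : set R :=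
  [set` Interval (BLeft k) (BSide s (k + 1/4))].

Lemma lebesgue_measure_quarter_Iic k s m :
  mu (quarter_itv k s `&` `]-oo, m]) = (qclamp (m - k))%:E.
Proof.
rewrite /quarter_itv.
have [mk|km] := ltP m k.
  rewrite qclamp_le0 ?subr_le0 ?ltW // (_ : _ `&` _ = set0) ?measure0 //.
  by apply/seteqP; split => x //=; rewrite !in_itv /= => -[/andP[? _] ?]; lra.
have [mk4|km4] := ltP m (k + 1/4).
  rewrite (_ : _ `&` _ = `[k, m]%classic).
    rewrite lebesgue_measure_itv /= lte_fin /qclamp.
    by case: ltP => ?; rewrite -?EFinD; congr (_%:E); cases_lra.
  apply/seteqP; split => x /=; rewrite !in_itv /=.
    by case: s => /= -[/andP[-> _] ->].
  by case: s => /= /andP[? ?]; split => //; apply/andP; split => //; lra.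
rewrite qclamp_ge ?lerBrDl // (_ : _ `&` _ = [set` Interval (BLeft k) (BSide s (k + 1/4))]).
  rewrite lebesgue_measure_itv /= lte_fin ltrDl divr_gt0 //.
  by rewrite -EFinD addrAC subrr add0r.
apply/seteqP; split => x /=; first by case.
by move=> xI; split => //; move: xI; rewrite !in_itv /=; case: s => /= /andP[? ?]; lra.
Qed.

Lemma measurable_quarter_itv k s : measurable (quarter_itv k s).
Proof. exact: measurable_itv. Qed.

Lemma indic_quarter_itv k s t : \1_(quarter_itv k s) t =
  (if k <= t then if t < k + 1/4 ?<= if ~~ s then 1 else 0 else 0) :> R.
Proof. by rewrite indicE mem_setE in_itv /=; case: (k <= t); case: (t < _ ?<= if _). Qed.

Lemma integral_quarter_indic c k (s : bool) v : 0 <= c -> 0 <= k ->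
  (\int[mu]_(t in `[0%R, v]) (c * \1_(quarter_itv k s) t)%:E =
   (c * qclamp (v - k))%R%:E)%E.
Proof.
move=> c0 k0.
rewrite (@integralZl_indic _ _ _ mu _ (measurable_itv _) (fun=> quarter_itv k s) c);
  last 2 first.
- by move=> /lt_le_trans /(_ c0); rewrite ltxx.
- exact: measurable_quarter_itv.
rewrite integral_indic; [|exact: measurable_itv|exact: measurable_quarter_itv].
rewrite EFinM -(lebesgue_measure_quarter_Iic k s); congr (_ * mu _)%E.
apply/seteqP; split => x [xk xv]; split => //; move: xk xv; rewrite /quarter_itv /= !in_itv /=.
  by move=> _ /andP[].
by move=> /andP[? _] ->; rewrite andbT; lra.
Qed.

Lemma integral_on_quarters c0 c1 c2 c3 v :
  0 <= c0 -> 0 <= c1 -> 0 <= c2 -> 0 <= c3 -> inI v ->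
  (\int[mu]_(t in `[0%R, v]) (on_quarters c0 c1 c2 c3 t)%:E =
   (quarter_mix c0 c1 c2 c3 v)%:E)%E.
Proof.
move=> ? ? ? ? /andP[v0 v1].
(* The last quarter is closed, so that the pieces cover [0, 1]. *)
pose piece (i : 'I_4) : R * R * bool :=
  nth (0, 0, true) [:: (c0, 0, true); (c1, 1/4, true); (c2, 1/2, true); (c3, 3/4, false)] i.
pose f i t := ((piece i).1.1 * \1_(quarter_itv (piece i).1.2 (piece i).2) t)%:E.
transitivity (\int[mu]_(t in `[0%R, v]) (\sum_(i < 4) f i t))%E.
  apply: eq_integral => t; rewrite inE /= in_itv /= => /andP[? ?].
  rewrite !big_ord_recl big_ord0 /f /= adde0 -!EFinD /on_quarters !indic_quarter_itv /=.
  congr (_%:E); cases_lra.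
rewrite ge0_integral_sum //.
- rewrite !big_ord_recl big_ord0 adde0 /f /= !integral_quarter_indic; [|lra..].
  by rewrite -!EFinD /quarter_mix subr0; congr (_%:E); ring.
- move=> i; apply/measurable_EFinP/measurable_funM => //.
  by apply: measurable_indic; exact: measurable_itv.
- by case=> -[|[|[|[|]]]] // ? t _; rewrite lee_fin mulr_ge0.
Qed.

Lemma measurable_on_quarters d (T : measurableType d) (f0 f1 f2 f3 : R -> T) :
  measurable_fun setT f0 -> measurable_fun setT f1 ->
  measurable_fun setT f2 -> measurable_fun setT f3 ->
  measurable_fun setT (fun t => on_quarters (f0 t) (f1 t) (f2 t) (f3 t) t).
Proof.
move=> *; have lt_cst c : measurable_fun setT (fun t : R => t < c).
  exact: measurable_fun_ltr.
by rewrite /on_quarters; do 3 apply: measurable_fun_ifT => //.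
Qed.

End quarter_measure.

Section shuffle_law.
Variable R : realType.
Local Notation mu := (@lebesgue_measure R).
Implicit Types a b u x : R.

Lemma lebesgue_measure_shuffle_rect (q0 q1 q2 q3 : R) a b :
  0 <= q0 -> 0 <= q1 -> 0 <= q2 -> 0 <= q3 ->
  mu ((fun x => (x, quarter_shuffle q0 q1 q2 q3 x)) @^-1` (`[0, a] `*` `[0, b]) `&` `[0, 1]) =
  (shuffle_copula q0 q1 q2 q3 a b)%:E.
Proof.
move=> ? ? ? ?.
pose piece k s q := quarter_itv k s `&` `]-oo, Num.min a (b + k - q)].
have -> : (fun x => (x, quarter_shuffle q0 q1 q2 q3 x)) @^-1` (`[0, a] `*` `[0, b])
            `&` `[0, 1] =
    piece 0 true q0 `|` (piece (1/4) true q1 `|`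
                         (piece (1/2) true q2 `|` piece (3/4) false q3)).
  apply/seteqP; split => x /=; rewrite /piece /quarter_itv /= !in_itv /= !le_min.
    by rewrite /quarter_shuffle /on_quarters; cases_lra.
  by case=> [|[|[|]]] [/andP[? ?] /andP[? ?]];
    rewrite /quarter_shuffle /on_quarters; cases_lra.
have mpiece k s q : measurable (piece k s q).
  by apply: measurableI; exact: measurable_itv.
have disjoint A B : (forall x, A x -> B x -> False) -> A `&` B = set0.
  by move=> AB; apply/seteqP; split => x // [/AB].
rewrite !measureU.
- rewrite /piece /= !lebesgue_measure_quarter_Iic -!EFinD; congr (_%:E).
  by rewrite /shuffle_copula /shuffle_piece; lra.
all: first [by repeat apply: measurableU; exact: mpiece | apply: disjoint => x].
all: rewrite /piece /quarter_itv /= !in_itv /=; lra.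
Qed.

Definition quantile_for (Q F : R -> R) : Prop :=
  forall x u : R, inI x -> inI u -> (0 <= Q x <= u) = (x <= F u).

Lemma quantile_for_id : quantile_for id id.
Proof. by move=> x u /andP[-> _]. Qed.

Lemma quarter_shuffle_in01 (q0 q1 q2 q3 : R) x :
  0 <= q0 <= 3/4 -> 0 <= q1 <= 3/4 -> 0 <= q2 <= 3/4 -> 0 <= q3 <= 3/4 ->
  inI x -> inI (quarter_shuffle q0 q1 q2 q3 x).
Proof.
move=> /andP[? ?] /andP[? ?] /andP[? ?] /andP[? ?] /andP[? ?].
rewrite /inI /quarter_shuffle /on_quarters; cases_lra.
Qed.

Lemma preimage_quantile_rect (h Q1 Q2 F1 F2 : R -> R) u1 u2 :
  (forall x, inI x -> inI (h x)) -> quantile_for Q1 F1 -> quantile_for Q2 F2 ->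
  inI u1 -> inI u2 ->
  (fun x => (Q1 x, Q2 (h x))) @^-1` (`[0, u1] `*` `[0, u2]) `&` `[0, 1] =
  (fun x => (x, h x)) @^-1` (`[0, F1 u1] `*` `[0, F2 u2]) `&` `[0, 1].
Proof.
move=> hI QF1 QF2 u1I u2I; apply/seteqP; split => x [] /=; rewrite !in_itv /= => + xI.
  rewrite QF1 ?QF2 ?hI // => -[xF1 hxF2]; split => //.
  by case/andP: (hI x xI) => -> _; case/andP: xI => -> _; rewrite xF1 hxF2.
by move=> [/andP[_ xF1] /andP[_ hxF2]]; rewrite QF1 ?QF2 ?hI.
Qed.

Definition uniform01 : probability (measurableTypeR R) R := uniform_prob (@ltr01 R).

Lemma uniform01E (A : set R) : measurable A -> uniform01 A = mu (A `&` `[0, 1]).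
Proof.
move=> mA; rewrite /uniform01 /= /uniform_prob integral_uniform_pdf.
rewrite (eq_integral (fun=> 1%:E)); last first.
  move=> x; rewrite inE /= => -[_]; rewrite in_itv /= /uniform_pdf => ->.
  by rewrite subr0 invr1.
by rewrite integral_cst /= ?mul1e //; exact: measurableI.
Qed.

Definition shuffle_map (Q1 Q2 : R -> R) (q0 q1 q2 q3 : R) (x : measurableTypeR R) : R * R :=
  (Q1 x, Q2 (quarter_shuffle q0 q1 q2 q3 x)).

Lemma measurable_shuffle_map (Q1 Q2 : R -> R) (q0 q1 q2 q3 : R) :
  measurable_fun setT Q1 -> measurable_fun setT Q2 ->
  measurable_fun setT (shuffle_map Q1 Q2 q0 q1 q2 q3).
Proof.
move=> mQ1 mQ2; apply: measurable_fun_pair => //.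
apply: measurableT_comp => //.
by apply: measurable_on_quarters; repeat apply: measurable_funD.
Qed.

Definition shuffle_law (q0 q1 q2 q3 : R) (Q1 Q2 : R -> R)
    (mQ1 : measurable_fun setT Q1) (mQ2 : measurable_fun setT Q2) :
    probability (R * R)%type R :=
  distribution uniform01 (mfun_Sub (mem_set (measurable_shuffle_map q0 q1 q2 q3 mQ1 mQ2))).

Lemma shuffle_law_rect (q0 q1 q2 q3 : R) (Q1 Q2 F1 F2 : R -> R)
    (mQ1 : measurable_fun setT Q1) (mQ2 : measurable_fun setT Q2) u1 u2 :
  0 <= q0 <= 3/4 -> 0 <= q1 <= 3/4 -> 0 <= q2 <= 3/4 -> 0 <= q3 <= 3/4 ->
  quantile_for Q1 F1 -> quantile_for Q2 F2 -> inI u1 -> inI u2 ->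
  shuffle_law q0 q1 q2 q3 mQ1 mQ2 (`[0, u1] `*` `[0, u2]) =
  (shuffle_copula q0 q1 q2 q3 (F1 u1) (F2 u2))%:E.
Proof.
move=> hq0 hq1 hq2 hq3 QF1 QF2 u1I u2I.
rewrite /shuffle_law /distribution /pushforward /= uniform01E; last first.
  rewrite -[X in measurable X]setTI; apply: measurable_shuffle_map => //.
  by apply: measurableX; exact: measurable_itv.
rewrite (preimage_quantile_rect _ QF1 QF2) //; last by move=> x; exact: quarter_shuffle_in01.
have q_ge0 q : 0 <= q <= 3/4 -> 0 <= q by case/andP.
by apply: lebesgue_measure_shuffle_rect; apply: q_ge0.
Qed.

End shuffle_law.

Section example.
Variable R : realType.
Implicit Types t u v x : R.

Definition cdf_cvx : R -> R := (fun u => u / 2) \max (fun u => 3 * u / 2 - 1 / 2).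
Definition cdf_ccv : R -> R := (fun u => 3 * u / 2) \min (fun u => u / 2 + 1 / 2).
Definition qf_cvx : R -> R := (fun x => 2 * x) \min (fun x => 1 / 3 + 2 * x / 3).
Definition qf_ccv : R -> R := (fun x => 2 * x / 3) \max (fun x => 2 * x - 1).

Ltac affine := repeat first
  [ exact: cvg_id | exact: cvg_cst | apply: cvgD | apply: cvgB
  | apply: cvgMr_tmp | apply: cvgMl_tmp ].

Lemma continuous_cdf_cvx : continuous cdf_cvx.
Proof. by move=> u; rewrite /cdf_cvx; apply: continuous_max; affine. Qed.

Lemma continuous_cdf_ccv : continuous cdf_ccv.
Proof. by move=> u; rewrite /cdf_ccv; apply: continuous_min; affine. Qed.

Lemma continuous_qf_cvx : continuous qf_cvx.
Proof. by move=> u; rewrite /qf_cvx; apply: continuous_min; affine. Qed.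

Lemma continuous_qf_ccv : continuous qf_ccv.
Proof. by move=> u; rewrite /qf_ccv; apply: continuous_max; affine. Qed.

Ltac piecewise :=
  rewrite /cdf_cvx /cdf_ccv /qf_cvx /qf_ccv /= /Order.max /Order.min; cases_lra.

Lemma quantile_for_cvx : quantile_for qf_cvx cdf_cvx.
Proof. by move=> x u /andP[? ?] /andP[? ?]; apply/idP/idP; piecewise. Qed.

Lemma quantile_for_ccv : quantile_for qf_ccv cdf_ccv.
Proof. by move=> x u /andP[? ?] /andP[? ?]; apply/idP/idP; piecewise. Qed.

Lemma df01_cdf_cvx : df01 cdf_cvx.
Proof. by split=> [||x y ?|x /andP[? ?]]; rewrite /inI; piecewise. Qed.

Lemma df01_cdf_ccv : df01 cdf_ccv.
Proof. by split=> [||x y ?|x /andP[? ?]]; rewrite /inI; piecewise. Qed.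

Lemma cdf_cvx_half : cdf_cvx (1/2) = 1/4. Proof. by piecewise. Qed.
Lemma cdf_ccv_half : cdf_ccv (1/2) = 3/4. Proof. by piecewise. Qed.

Lemma cdf_cvxD_ccv u : cdf_cvx u + cdf_ccv u = 2 * u.
Proof. by piecewise. Qed.

Definition cop1 := shuffle_copula (1/4 : R) (3/4) (1/2) 0.
Definition cop2 := shuffle_copula (1/2 : R) (1/4) (3/4) 0.
Definition cop3 := shuffle_copula (3/4 : R) 0 (1/2) (1/4).
Definition cop4 := shuffle_copula (3/4 : R) (1/4) 0 (1/2).

Ltac quarter_permutation := apply: copula2_shuffle; try lra;
  by move=> u uI; have := qclamp_sum uI; rewrite subr0; lra.

Lemma copula2_cop1 : copula2 cop1. Proof. by quarter_permutation. Qed.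
Lemma copula2_cop2 : copula2 cop2. Proof. by quarter_permutation. Qed.
Lemma copula2_cop3 : copula2 cop3. Proof. by quarter_permutation. Qed.
Lemma copula2_cop4 : copula2 cop4. Proof. by quarter_permutation. Qed.

Let mid := @measurable_id _ R setT.
Let mqf_cvx := continuous_measurable_fun continuous_qf_cvx.
Let mqf_ccv := continuous_measurable_fun continuous_qf_ccv.

Definition law1 := shuffle_law (1/4) (3/4) (1/2) 0 mqf_cvx mid.
Definition law2 := shuffle_law (1/2) (1/4) (3/4) 0 mid mqf_ccv.
Definition law3 := shuffle_law (3/4) 0 (1/2) (1/4) mid mqf_cvx.
Definition law4 := shuffle_law (3/4) (1/4) 0 (1/2) mqf_ccv mid.

Definition rect1 u1 u2 := cop1 (cdf_cvx u1) u2.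
Definition rect2 u1 u2 := cop2 u1 (cdf_ccv u2).
Definition rect3 u1 u2 := cop3 u1 (cdf_cvx u2).
Definition rect4 u1 u2 := cop4 (cdf_ccv u1) u2.

Definition cond_law t : probability (R * R)%type R := on_quarters law1 law2 law3 law4 t.

Lemma cond_law_rect t u1 u2 : inI u1 -> inI u2 ->
  cond_law t (`[0, u1] `*` `[0, u2]) =
  (on_quarters (rect1 u1 u2) (rect2 u1 u2) (rect3 u1 u2) (rect4 u1 u2) t)%:E.
Proof.
move=> u1I u2I; rewrite /cond_law.
rewrite (on_quarters_map (fun P : probability _ R => P (`[0, u1] `*` `[0, u2]))).
rewrite (on_quarters_map (@EFin R)).
by congr on_quarters; apply: shuffle_law_rect => //;
  first [exact: quantile_for_id | exact: quantile_for_cvx | exact: quantile_for_ccv | lra].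
Qed.

Lemma rect1_boundary u : inI u ->
  [/\ rect1 0 u = 0, rect1 u 0 = 0, rect1 u 1 = cdf_cvx u & rect1 1 u = u].
Proof. exact: (distorted_copula_boundary copula2_cop1 df01_cdf_cvx (df01_id R)). Qed.

Lemma rect2_boundary u : inI u ->
  [/\ rect2 0 u = 0, rect2 u 0 = 0, rect2 u 1 = u & rect2 1 u = cdf_ccv u].
Proof. exact: (distorted_copula_boundary copula2_cop2 (df01_id R) df01_cdf_ccv). Qed.

Lemma rect3_boundary u : inI u ->
  [/\ rect3 0 u = 0, rect3 u 0 = 0, rect3 u 1 = u & rect3 1 u = cdf_cvx u].
Proof. exact: (distorted_copula_boundary copula2_cop3 (df01_id R) df01_cdf_cvx). Qed.

Lemma rect4_boundary u : inI u ->
  [/\ rect4 0 u = 0, rect4 u 0 = 0, rect4 u 1 = cdf_ccv u & rect4 1 u = u].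
Proof. exact: (distorted_copula_boundary copula2_cop4 df01_cdf_ccv (df01_id R)). Qed.

Definition Cshuf u1 u2 v :=
  quarter_mix (rect1 u1 u2) (rect2 u1 u2) (rect3 u1 u2) (rect4 u1 u2) v.

Lemma copula3_Cshuf : copula3 Cshuf.
Proof.
split.
- move=> x y xI yI; rewrite /Cshuf quarter_mix0.
  have [-> -> _ _] := rect1_boundary xI; have [-> -> _ _] := rect2_boundary xI.
  have [-> -> _ _] := rect3_boundary xI; have [-> -> _ _] := rect4_boundary xI.
  by split=> //; rewrite quarter_mix_cst // mul0r.
- move=> x xI; rewrite /Cshuf.
  have [_ _ -> ->] := rect1_boundary xI; have [_ _ -> ->] := rect2_boundary xI.
  have [_ _ -> ->] := rect3_boundary xI; have [_ _ -> ->] := rect4_boundary xI.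
  have [_ _ _ r1] := rect1_boundary (inI1 R); have [_ _ r2 _] := rect2_boundary (inI1 R).
  have [_ _ r3 _] := rect3_boundary (inI1 R); have [_ _ _ r4] := rect4_boundary (inI1 R).
  rewrite r1 r2 r3 r4 quarter_mix_cst // mul1r !quarter_mix1.
  by split=> //; have := cdf_cvxD_ccv x; lra.
- move=> a1 b1 a2 b2 a3 b3 ha1 hb1 ha2 hb2 _ _ h1 h2 h3.
  apply: (quarter_mix_increasing (g0 := rect1) (g1 := rect2) (g2 := rect3) (g3 := rect4))
    => //.
  - exact: (increasing2_distorted copula2_cop1 df01_cdf_cvx (df01_id R)).
  - exact: (increasing2_distorted copula2_cop2 (df01_id R) df01_cdf_ccv).
  - exact: (increasing2_distorted copula2_cop3 (df01_id R) df01_cdf_cvx).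
  - exact: (increasing2_distorted copula2_cop4 df01_cdf_ccv (df01_id R)).
Qed.

Lemma cond_law_measurable (A : set (R * R)) : measurable A ->
  measurable_fun setT (fun t => cond_law t A).
Proof.
move=> _; rewrite /cond_law.
under eq_fun do rewrite (on_quarters_map (fun P : probability _ R => P A)).
exact: measurable_on_quarters.
Qed.

Lemma cond_kernel_Cshuf : cond_kernel Cshuf cond_law.
Proof.
split; first exact: cond_law_measurable.
move=> u1 u2 v u1I u2I vI.
under eq_integral do rewrite cond_law_rect //.
by rewrite integral_on_quarters // in01_ge0 // shuffle_copula_in01.
Qed.

Ltac case_quarter :=
  rewrite /on_quarters; case: ifP => _; [|case: ifP => _; [|case: ifP => _]].

Lemma F13_cond_law t u : inI u -> F13 cond_law t u = on_quarters cdf_cvx id id cdf_ccv t u.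
Proof.
move=> uI; rewrite /F13 cond_law_rect ?inI1 //=.
have [_ _ -> _] := rect1_boundary uI; have [_ _ -> _] := rect2_boundary uI.
have [_ _ -> _] := rect3_boundary uI; have [_ _ -> _] := rect4_boundary uI.
by case_quarter.
Qed.

Lemma F23_cond_law t u : inI u -> F23 cond_law t u = on_quarters id cdf_ccv cdf_cvx id t u.
Proof.
move=> uI; rewrite /F23 cond_law_rect ?inI1 //=.
have [_ _ _ ->] := rect1_boundary uI; have [_ _ _ ->] := rect2_boundary uI.
have [_ _ _ ->] := rect3_boundary uI; have [_ _ _ ->] := rect4_boundary uI.
by case_quarter.
Qed.

Lemma cont_cond_dfs_cond_law : cont_cond_dfs cond_law.
Proof.
have id_cont : continuous (@id R) by move=> ?; exact: cvg_id.
apply: aeW => t _; split.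
- apply: (subspace_eq_continuous (f := on_quarters cdf_cvx id id cdf_ccv t)).
    by move=> u; rewrite mem_setE in_itv /= => uI; rewrite /from_subspace F13_cond_law.
  by apply/continuous_subspaceT/continuous_on_quarters;
    [exact: continuous_cdf_cvx | exact: id_cont | exact: id_cont | exact: continuous_cdf_ccv].
- apply: (subspace_eq_continuous (f := on_quarters id cdf_ccv cdf_cvx id t)).
    by move=> u; rewrite mem_setE in_itv /= => uI; rewrite /from_subspace F23_cond_law.
  by apply/continuous_subspaceT/continuous_on_quarters;
    [exact: id_cont | exact: continuous_cdf_ccv | exact: continuous_cdf_cvx | exact: id_cont].
Qed.

Definition cond_cop t : R -> R -> R := on_quarters cop1 cop2 cop3 cop4 t.

Lemma cond_copulas_cond_cop : cond_copulas cond_law cond_cop.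
Proof.
split.
  move=> s1 s2; apply: measurable_funTS; rewrite /cond_cop.
  under eq_fun do rewrite (on_quarters_map (fun C : R -> R -> R => C s1 s2)).
  exact: measurable_on_quarters.
apply: aeW => t _; split.
  by apply: on_quarters_ind; [exact: copula2_cop1 | exact: copula2_cop2
                             | exact: copula2_cop3 | exact: copula2_cop4].
move=> u1 u2 u1I u2I.
by rewrite cond_law_rect // F13_cond_law // F23_cond_law // /cond_cop; case_quarter.
Qed.

Definition Cp (s1 s2 : R) := quarter_mix (cop1 s1 s2) (cop2 s1 s2) (cop3 s1 s2) (cop4 s1 s2) 1.

Lemma Cp_in01 s1 s2 : inI (Cp s1 s2).
Proof. by apply: quarter_mix_in01; exact: shuffle_copula_in01. Qed.

Lemma partial_copula_cond_cop s1 s2 : partial_copula cond_cop s1 s2 = Cp s1 s2.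
Proof.
rewrite /partial_copula /cond_cop.
under eq_integral do rewrite (on_quarters_map (fun C : R -> R -> R => C s1 s2)).
by rewrite integral_on_quarters ?inI1 // in01_ge0 // shuffle_copula_in01.
Qed.

Lemma pvc_condE u1 u2 v : inI u1 -> inI u2 -> inI v ->
  pvc cond_law cond_cop u1 u2 v =
  quarter_mix (Cp (cdf_cvx u1) u2) (Cp u1 (cdf_ccv u2))
              (Cp u1 (cdf_cvx u2)) (Cp (cdf_ccv u1) u2) v.
Proof.
move=> u1I u2I vI; rewrite /pvc.
under eq_integral => t _.
  rewrite F13_cond_law // F23_cond_law // partial_copula_cond_cop.
  have -> : Cp (on_quarters cdf_cvx id id cdf_ccv t u1)
                  (on_quarters id cdf_ccv cdf_cvx id t u2) =
            on_quarters (Cp (cdf_cvx u1) u2) (Cp u1 (cdf_ccv u2))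
                        (Cp u1 (cdf_cvx u2)) (Cp (cdf_ccv u1) u2) t by case_quarter.
  over.
by rewrite integral_on_quarters // in01_ge0 // Cp_in01.
Qed.

Ltac eval_cops :=
  rewrite /cop1 /cop2 /cop3 /cop4 /shuffle_copula /shuffle_piece /qclamp /Order.min;
  split; eval_ifs.

Lemma cops_at_quarter_half :
  [/\ cop1 (1/4) (1/2) = 1/4, cop2 (1/4) (1/2) = 0,
      cop3 (1/4) (1/2) = 0 & cop4 (1/4) (1/2) = 0].
Proof. by eval_cops. Qed.

Lemma cops_at_half_3quarters :
  [/\ cop1 (1/2) (3/4) = 1/4, cop2 (1/2) (3/4) = 1/2,
      cop3 (1/2) (3/4) = 1/4 & cop4 (1/2) (3/4) = 1/4].
Proof. by eval_cops. Qed.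

Lemma cops_at_half_quarter :
  [/\ cop1 (1/2) (1/4) = 0, cop2 (1/2) (1/4) = 0,
      cop3 (1/2) (1/4) = 1/4 & cop4 (1/2) (1/4) = 0].
Proof. by eval_cops. Qed.

Lemma cops_at_3quarters_half :
  [/\ cop1 (3/4) (1/2) = 1/4, cop2 (3/4) (1/2) = 1/4,
      cop3 (3/4) (1/2) = 1/4 & cop4 (3/4) (1/2) = 1/2].
Proof. by eval_cops. Qed.

Lemma Cshuf_probe : Cshuf (1/2) (1/2) 1 = 3/8.
Proof.
rewrite /Cshuf /rect1 /rect2 /rect3 /rect4 cdf_cvx_half cdf_ccv_half quarter_mix1.
have [-> _ _ _] := cops_at_quarter_half; have [_ -> _ _] := cops_at_half_3quarters.
have [_ _ -> _] := cops_at_half_quarter; have [_ _ _ ->] := cops_at_3quarters_half.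
lra.
Qed.

Lemma pvc_probe : pvc cond_law cond_cop (1/2) (1/2) 1 = 3/16.
Proof.
have halfI : inI (1/2 : R) by rewrite /inI; lra.
rewrite pvc_condE ?inI1 // cdf_cvx_half cdf_ccv_half quarter_mix1 /Cp !quarter_mix1.
have [-> -> -> ->] := cops_at_quarter_half; have [-> -> -> ->] := cops_at_half_3quarters.
have [-> -> -> ->] := cops_at_half_quarter; have [-> -> -> ->] := cops_at_3quarters_half.
lra.
Qed.

Lemma Cshuf_in01 u1 u2 v : inI (Cshuf u1 u2 v).
Proof. by apply: quarter_mix_in01; exact: shuffle_copula_in01. Qed.

Lemma pvc_in01 u1 u2 v : inI u1 -> inI u2 -> inI v -> inI (pvc cond_law cond_cop u1 u2 v).
Proof. by move=> *; rewrite pvc_condE //; apply: quarter_mix_in01; exact: Cp_in01. Qed.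

Lemma dinf_Cshuf_pvc : 3 / 16 <= dinf Cshuf (pvc cond_law cond_cop).
Proof.
apply: ub_le_sup.
  exists 1 => _ [u1 [u2 [v [u1I u2I vI ->]]]].
  move: (Cshuf_in01 u1 u2 v) (pvc_in01 u1I u2I vI); rewrite /inI ler_norml; lra.
have halfI : inI (1/2 : R) by rewrite /inI; lra.
exists (1/2), (1/2), 1; split=> //; first exact: inI1.
by rewrite Cshuf_probe pvc_probe ger0_norm; lra.
Qed.

End example.

Theorem theorem5p6 (R : realType) :
  exists (C : R -> R -> R -> R) (K : R -> probability (R * R)%type R)
         (Ct : R -> R -> R -> R),
    [/\ copula3 C, cond_kernel C K, cont_cond_dfs K, cond_copulas K Ct &
        3 / 16 <= dinf C (pvc K Ct)].
Proof.
exists (@Cshuf R), (@cond_law R), (@cond_cop R); split.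
- exact: copula3_Cshuf.
- exact: cond_kernel_Cshuf.
- exact: cont_cond_dfs_cond_law.
- exact: cond_copulas_cond_cop.
- exact: dinf_Cshuf_pvc.
Qed.
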